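(* Let $\mathbf v_1,\mathbf v_2,\mathbf v_3,\mathbf v_4$ be decorated Lagrangians in $\mathbf R^{2n}$ such that $\mathbf v_1$ and $\mathbf v_3$ are transverse. Then $$\Lambda_{24}=\Lambda_{23}\Lambda_{13}^{-1}\Lambda_{14}+\Lambda_{21}\Lambda_{31}^{-1}\Lambda_{34}.$$
   Context: $\mathbf R^{2n}$ carries the standard symplectic form $\omega(x,y)={}^T x\begin{pmatrix}0&\mathrm{Id}\\-\mathrm{Id}&0\end{pmatrix}y$. A decorated Lagrangian is a pair $(L,\mathbf v)$ with $L$ a Lagrangian subspace ($n$-dimensional, $\omega|_L=0$) and $\mathbf v=(v_1,\dots,v_n)$ a basis of $L$, denoted by $\mathbf v$. Decorated Lagrangians are transverse if their Lagrangians intersect trivially. The symplectic $\Lambda$-length is $\Lambda_{ij}=(\omega(v_{i,k},v_{j,l}))_{k,l=1,\dots,n}$, an $n\times n$ matrix, invertible iff $\mathbf v_i,\mathbf v_j$ are transverse. *)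

From mathcomp Require Import all_boot all_order all_algebra.
From mathcomp Require Import reals.
Set Implicit Arguments. Unset Strict Implicit. Unset Printing Implicit Defensive.
Import Order.TTheory GRing.Theory Num.Theory.
Local Open Scope ring_scope.

Definition symp_mx (R : nzRingType) (n : nat) : 'M[R]_(n + n) :=
  block_mx 0 1%:M (- 1%:M) 0.

Definition omega (R : nzRingType) (n : nat) (x y : 'cV[R]_(n + n)) : R :=
  (x^T *m symp_mx R n *m y) 0 0.

(* A decorated Lagrangian is represented by the (2n x n) matrix V whose
   columns v_1..v_n form the basis; L is the column space of V. *)
Definition decorated_lagrangian (R : fieldType) (n : nat)
    (V : 'M[R]_(n + n, n)) : Prop :=
  \rank V = n /\ (forall k l : 'I_n, omega (col k V) (col l V) = 0).

Definition transverse (R : fieldType) (n : nat) (V W : 'M[R]_(n + n, n)) : Prop :=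
  forall x : 'cV[R]_(n + n),
    (x^T <= V^T)%MS -> (x^T <= W^T)%MS -> x = 0.

Definition Lambda (R : nzRingType) (n : nat) (V W : 'M[R]_(n + n, n)) : 'M[R]_n :=
  \matrix_(k < n, l < n) omega (col k V) (col l W).

From mathcomp Require Import all_boot all_order all_algebra.
From mathcomp Require Import reals.
Set Implicit Arguments. Unset Strict Implicit. Unset Printing Implicit Defensive.
Import Order.TTheory GRing.Theory Num.Theory.
Local Open Scope ring_scope.

(* Transversality of v_1 and v_3 makes [v_1 v_3] a basis of R^(2n), so
   v_4 = v_1 A + v_3 B for some n x n matrices A, B.  Since Lambda is linear
   in its second argument and vanishes on a Lagrangian paired with itself,
   Lambda_14 = Lambda_13 B, Lambda_34 = Lambda_31 A and
   Lambda_24 = Lambda_21 A + Lambda_23 B, which is the identity once A and B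
   are solved for; in particular v_2 and v_4 need not be Lagrangian.
   Lambda_13 is invertible because the Gram matrix of J in the basis
   [v_1 v_3] is the invertible block matrix [[0, Lambda_13], [Lambda_31, 0]]. *)

Section SymplecticLambda.
Variables (R : fieldType) (n : nat).
Implicit Types V W : 'M[R]_(n + n, n).
Local Notation J := (symp_mx R n).

Lemma LambdaE V W : Lambda V W = V^T *m J *m W.
Proof.
apply/matrixP => k l; rewrite !mxE /omega tr_col -row_mul !mxE.
by apply: eq_bigr => j _; rewrite !mxE.
Qed.

Lemma symp_mx_unit : J \in unitmx.
Proof.
have JNJ : J *m (- J) = 1%:M.
  rewrite mulmxN /symp_mx mulmx_block !mul0mx !mulmx0 !mul1mx ?mulNmx ?mulmx1.
  by rewrite !addr0 !add0r opp_block_mx !opprK oppr0 scalar_mx_block.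
by case: (mulmx1_unit JNJ).
Qed.

Lemma Lambda_comb_r V W U (A B : 'M_n) :
  Lambda U (V *m A + W *m B) = Lambda U V *m A + Lambda U W *m B.
Proof. by rewrite !LambdaE mulmxDr !mulmxA. Qed.

Lemma Lambda_lagrangian V : decorated_lagrangian V -> Lambda V V = 0.
Proof. by case=> _ isoV; apply/matrixP => k l; rewrite !mxE isoV. Qed.

Lemma transverse_sym V W : transverse V W -> transverse W V.
Proof. by move=> tVW x xW xV; apply: tVW. Qed.

Lemma row_mx_transverse_unit V W :
  \rank V = n -> \rank W = n -> transverse V W -> row_mx V W \in unitmx.
Proof.
move=> rkV rkW tVW.
have capVW : (V^T :&: W^T)%MS = 0.
  apply/row_matrixP => i; rewrite row0.
  have xV : ((row i (V^T :&: W^T)%MS)^T^T <= V^T)%MS.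
    by rewrite trmxK (submx_trans (row_sub i _) (capmxSl _ _)).
  have xW : ((row i (V^T :&: W^T)%MS)^T^T <= W^T)%MS.
    by rewrite trmxK (submx_trans (row_sub i _) (capmxSr _ _)).
  by move/(congr1 trmx): (tVW _ xV xW); rewrite trmxK trmx0.
have := mxrank_sum_cap V^T W^T.
rewrite capVW mxrank0 addn0 !mxrank_tr rkV rkW addsmxE -tr_row_mx mxrank_tr.
by move=> rkVW; rewrite -row_free_unit /row_free rkVW.
Qed.

Lemma transverse_decomp p V W (X : 'M_(n + n, p)) :
  \rank V = n -> \rank W = n -> transverse V W ->
  exists A B, X = V *m A + W *m B.
Proof.
move=> rkV rkW tVW; set Y := invmx (row_mx V W) *m X.
exists (usubmx Y), (dsubmx Y).
by rewrite -mul_row_col vsubmxK mulKVmx // row_mx_transverse_unit.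
Qed.

Lemma antidiag_block_unit (B C : 'M[R]_n) :
  block_mx 0 B C 0 \in unitmx -> B \in unitmx.
Proof.
move/mulmxV; rewrite -[invmx _]submxK mulmx_block scalar_mx_block.
rewrite !mul0mx !add0r => /eq_block_mx[BD _ _ _].
by case: (mulmx1_unit BD).
Qed.

Lemma Lambda_transverse_unit V W :
  decorated_lagrangian V -> decorated_lagrangian W -> transverse V W ->
  Lambda V W \in unitmx.
Proof.
move=> lagV lagW tVW; apply: (@antidiag_block_unit _ (Lambda W V)).
rewrite -{1}(Lambda_lagrangian lagV) -(Lambda_lagrangian lagW) !LambdaE.
rewrite -mul_col_row -mul_col_mx -tr_row_mx !unitmx_mul unitmx_tr symp_mx_unit.
by case: lagV lagW => rkV _ [rkW _]; rewrite row_mx_transverse_unit.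
Qed.

End SymplecticLambda.

Theorem proposition3p17 (R : realType) (n : nat)
    (V1 V2 V3 V4 : 'M[R]_(n + n, n)) :
  decorated_lagrangian V1 -> decorated_lagrangian V2 ->
  decorated_lagrangian V3 -> decorated_lagrangian V4 ->
  transverse V1 V3 ->
  Lambda V2 V4 =
    Lambda V2 V3 *m invmx (Lambda V1 V3) *m Lambda V1 V4
    + Lambda V2 V1 *m invmx (Lambda V3 V1) *m Lambda V3 V4.
Proof.
move=> lag1 _ lag3 _ t13.
have u13 := Lambda_transverse_unit lag1 lag3 t13.
have u31 := Lambda_transverse_unit lag3 lag1 (transverse_sym t13).
have [A [B ->]] := transverse_decomp V4 lag1.1 lag3.1 t13.
rewrite !Lambda_comb_r (Lambda_lagrangian lag1) (Lambda_lagrangian lag3).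
by rewrite !mul0mx add0r addr0 -!mulmxA !mulKmx // addrC.
Qed.
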